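(* For every integer $k\ge2$, in the setting of the context, $\lim_{p\to\infty}\gamma_p(k)=\frac{12}{k}$.
   Context: For integers $k\ge2$, $n\ge1$ and $x\in\mathbb R$: $P_{n,k}(x)=\left(1+\frac{x^{n-1}}{2}\right)^{k+1}-\left(1-\frac{x^{n-1}}{2}\right)^{k+1}$, and for $n>k$: $Q_{n,k}(x)=(k+1)x^{n-k}$. Fix an integer $k\ge2$ and, for each integer $n>k$, an arbitrary $\xi(k;n)\in(0,1)$ with $P_{n,k}(\xi(k;n))=Q_{n,k}(\xi(k;n))$. Let $\alpha=\limsup_{n\to\infty}\xi(k;n)^{n-1}$ and let $(n_p)_{p\in\mathbb N}$ be a strictly increasing sequence of integers $>k$ with $\xi(k;n_p)^{n_p-1}\to\alpha$. For $n>k$ put $$C_n(k)=\frac{\xi(k;n)^{3n-k-2}}{\frac{1}{k+2}\left[\left(1+\frac{\xi(k;n)^{n-1}}{2}\right)^{k+2}-\left(1-\frac{\xi(k;n)^{n-1}}{2}\right)^{k+2}\right]-\xi(k;n)^{n-k}},$$ and $\gamma_p(k)=C_{n_p}(k)$ for $p\in\mathbb N$. *)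

From Stdlib Require Import Reals Lra Lia.
Open Scope R_scope.

Definition P (n k : nat) (x : R) : R :=
  (1 + x ^ (n - 1) / 2) ^ (k + 1) - (1 - x ^ (n - 1) / 2) ^ (k + 1).

(* Q_{n,k}(x) = (k+1) x^(n-k), used for n > k *)
Definition Q (n k : nat) (x : R) : R := INR (k + 1) * x ^ (n - k).

(* C_n(k) evaluated at the chosen root x = xi(k;n) *)
Definition Cn (n k : nat) (x : R) : R :=
  x ^ (3 * n - k - 2) /
  (/ INR (k + 2) *
     ((1 + x ^ (n - 1) / 2) ^ (k + 2) - (1 - x ^ (n - 1) / 2) ^ (k + 2))
   - x ^ (n - k)).

Definition is_limsup (u : nat -> R) (l : R) : Prop :=
  forall eps : R, eps > 0 ->
    (exists N : nat, forall n : nat, (n >= N)%nat -> u n < l + eps) /\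
    (forall N : nat, exists n : nat, (n >= N)%nat /\ l - eps < u n).

(* With t = x^(n-1)/2, the binomial expansion reads
   (1+t)^m - (1-t)^m = 2 m t + t^3 R_m(t) for a polynomial R_m (rem3 below,
   built together with the second-order remainder rem2 of (1-t)^m).  At a root
   of P = Q this gives x^(n-k) = t F_k(t), F_k(t) = 2 + t^2 R_{k+1}(t)/(k+1),
   and C_n(k) = 4 F_k(t) / D_k(t), D_k(t) = R_{k+2}(t)/(k+2) - R_{k+1}(t)/(k+1),
   a continuous function of t with value 4 * 2 / (2k/3) = 12/k at t = 0.
   Splitting x^(n-1) = x^(k-1) x^(n-k) also gives x^(k-1) F_k(t) = 2; since
   R_{k+1} >= 2, x^(n-1) >= eps forces x^(k-1) <= q(eps) < 1 and hence
   eps^(k-1) <= (x^(k-1))^(n-1) <= q^(n-1), impossible for large n.  So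
   xi(k;n)^(n-1) -> 0, t -> 0 along the subsequence, and C_{n_p}(k) -> 12/k. *)

From Stdlib Require Import Reals Lra Lia.
From Coquelicot Require Import Coquelicot.
Open Scope R_scope.

(* Second-order remainder of (1-t)^m: (1-t)^m = 1 - m t + t^2 rem2 m t. *)
Fixpoint rem2 (m : nat) (t : R) : R :=
  match m with
  | O => 0
  | S m => INR m + (1 - t) * rem2 m t
  end.

(* Cubic remainder of the odd part: (1+t)^m - (1-t)^m = 2 m t + t^3 rem3 m t. *)
Fixpoint rem3 (m : nat) (t : R) : R :=
  match m with
  | O => 0
  | S m => (1 + t) * rem3 m t + 2 * rem2 m t
  end.

Lemma rem2_spec (m : nat) (t : R) : (1 - t) ^ m = 1 - INR m * t + t ^ 2 * rem2 m t.
Proof.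
  induction m as [|m IH]; simpl pow; simpl rem2.
  - simpl; ring.
  - rewrite IH, S_INR; ring.
Qed.

Lemma rem3_spec (m : nat) (t : R) :
  (1 + t) ^ m - (1 - t) ^ m = 2 * INR m * t + t ^ 3 * rem3 m t.
Proof.
  induction m as [|m IH].
  - simpl; ring.
  - replace ((1 + t) ^ S m - (1 - t) ^ S m)
      with ((1 + t) * ((1 + t) ^ m - (1 - t) ^ m) + 2 * t * (1 - t) ^ m)
      by (simpl; ring).
    rewrite IH, rem2_spec, S_INR; simpl rem3; ring.
Qed.

Lemma rem2_at_0 (m : nat) : rem2 m 0 = INR m * (INR m - 1) / 2.
Proof.
  induction m as [|m IH]; simpl rem2.
  - simpl; field.
  - rewrite IH, S_INR; field.
Qed.

Lemma rem3_at_0 (m : nat) : rem3 m 0 = INR m * (INR m - 1) * (INR m - 2) / 3.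
Proof.
  induction m as [|m IH]; simpl rem3.
  - simpl; field.
  - rewrite IH, rem2_at_0, S_INR; field.
Qed.

(* On [0,1] the remainders are nonnegative, and R_m >= R_3 = 2 for m >= 3;
   this lower bound is what makes the roots' powers decay. *)
Lemma rem2_nonneg (m : nat) (t : R) : 0 <= t <= 1 -> 0 <= rem2 m t.
Proof.
  intros Ht; induction m as [|m IH]; simpl rem2; [lra|].
  pose proof (pos_INR m); nra.
Qed.

Lemma rem3_nonneg (m : nat) (t : R) : 0 <= t <= 1 -> 0 <= rem3 m t.
Proof.
  intros Ht; induction m as [|m IH]; simpl rem3; [lra|].
  pose proof (rem2_nonneg m t Ht); nra.
Qed.

Lemma rem3_ge_2 (m : nat) (t : R) : (3 <= m)%nat -> 0 <= t <= 1 -> 2 <= rem3 m t.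
Proof.
  intros Hm Ht; induction Hm as [|m Hm IH].
  - simpl; lra.
  - simpl rem3.
    pose proof (rem3_nonneg m t Ht); pose proof (rem2_nonneg m t Ht); nra.
Qed.

Lemma rem2_continuous (m : nat) (t : R) : continuous (rem2 m) t.
Proof.
  induction m as [|m IH]; simpl rem2.
  - apply continuous_const.
  - apply (continuous_plus (fun _ => INR m) (fun s => (1 - s) * rem2 m s));
      [apply continuous_const|].
    apply (continuous_mult (fun s => 1 - s) (rem2 m)); [|exact IH].
    apply (continuous_minus (fun _ => 1) (fun s => s));
      [apply continuous_const | apply continuous_id].
Qed.

Lemma rem3_continuous (m : nat) (t : R) : continuous (rem3 m) t.
Proof.
  induction m as [|m IH]; simpl rem3.
  - apply continuous_const.
  - apply (continuous_plus (fun s => (1 + s) * rem3 m s) (fun s => 2 * rem2 m s)).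
    + apply (continuous_mult (fun s => 1 + s) (rem3 m)); [|exact IH].
      apply (continuous_plus (fun _ => 1) (fun s => s));
        [apply continuous_const | apply continuous_id].
    + apply (continuous_mult (fun _ => 2) (rem2 m));
        [apply continuous_const | apply rem2_continuous].
Qed.

Lemma pow_in_unit_interval (x : R) (m : nat) : 0 < x < 1 -> 0 < x ^ m <= 1.
Proof. intros Hx; induction m as [|m IH]; simpl; nra. Qed.

Definition expansion_param (n : nat) (x : R) : R := x ^ (n - 1) / 2.

Definition root_factor (k : nat) (t : R) : R := 2 + t ^ 2 * rem3 (k + 1) t / INR (k + 1).

Lemma expansion_param_pos (n : nat) (x : R) : 0 < x -> 0 < expansion_param n x.
Proof. intros Hx; unfold expansion_param; pose proof (pow_lt x (n - 1) Hx); lra. Qed.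

Lemma root_relation (n k : nat) (x : R) :
  P n k x = Q n k x ->
  x ^ (n - k) = expansion_param n x * root_factor k (expansion_param n x).
Proof.
  intros HPQ; unfold P, Q in HPQ; fold (expansion_param n x) in HPQ.
  rewrite rem3_spec in HPQ.
  assert (HK : 0 < INR (k + 1)) by (apply lt_0_INR; lia).
  apply Rmult_eq_reg_l with (INR (k + 1)); [|lra].
  rewrite <- HPQ; unfold root_factor; field; lra.
Qed.

(* Splitting x^(n-1) = x^(k-1) x^(n-k) in the root relation. *)
Lemma root_contraction (n k : nat) (x : R) :
  (1 <= k)%nat -> (k < n)%nat -> 0 < x -> P n k x = Q n k x ->
  x ^ (k - 1) * root_factor k (expansion_param n x) = 2.
Proof.
  intros Hk Hn Hx HPQ.
  pose proof (expansion_param_pos n x Hx) as Ht.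
  assert (Hsplit : 2 * expansion_param n x = x ^ (k - 1) * x ^ (n - k)).
  { unfold expansion_param; rewrite <- pow_add.
    replace (k - 1 + (n - k))%nat with (n - 1)%nat by lia; field. }
  rewrite (root_relation n k x HPQ) in Hsplit.
  apply Rmult_eq_reg_l with (expansion_param n x); lra.
Qed.

Lemma root_power_bound (n k : nat) (x eps : R) :
  (2 <= k)%nat -> (k < n)%nat -> 0 < x < 1 -> P n k x = Q n k x ->
  0 < eps -> eps <= x ^ (n - 1) ->
  eps ^ (k - 1) <= (/ (1 + eps ^ 2 / (4 * INR (k + 1)))) ^ (n - 1).
Proof.
  intros Hk Hn Hx HPQ Heps Hge.
  pose proof (root_contraction n k x ltac:(lia) Hn (proj1 Hx) HPQ) as Hc.
  pose proof (pow_in_unit_interval x (n - 1) Hx) as Hy.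
  unfold root_factor, expansion_param in Hc.
  set (t := x ^ (n - 1) / 2) in Hc.
  set (K := INR (k + 1)) in Hc |- *.
  assert (HK : 0 < K) by (unfold K; apply lt_0_INR; lia).
  assert (Hd : 0 < eps ^ 2 / (4 * K)) by (apply Rdiv_lt_0_compat; nra).
  assert (Ht : eps / 2 <= t <= 1 / 2) by (unfold t; lra).
  assert (HR : 2 <= rem3 (k + 1) t) by (apply rem3_ge_2; [lia | lra]).
  assert (Hgrow : 2 * (1 + eps ^ 2 / (4 * K)) <= 2 + t ^ 2 * rem3 (k + 1) t / K).
  { assert (eps ^ 2 / 4 <= t ^ 2) by nra.
    apply Rmult_le_reg_l with K; [lra|].
    field_simplify; nra. }
  assert (Hratio : x ^ (k - 1) <= / (1 + eps ^ 2 / (4 * K))).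
  { assert (Ha : 0 <= x ^ (k - 1)) by (apply pow_le; lra).
    apply Rmult_le_reg_r with (1 + eps ^ 2 / (4 * K)); [lra|].
    rewrite Rinv_l by lra; nra. }
  apply Rle_trans with ((x ^ (n - 1)) ^ (k - 1)); [apply pow_incr; lra|].
  replace ((x ^ (n - 1)) ^ (k - 1)) with ((x ^ (k - 1)) ^ (n - 1))
    by (rewrite <- !pow_mult; f_equal; lia).
  apply pow_incr; split; [apply pow_le; lra | exact Hratio].
Qed.

Lemma root_powers_vanish (k : nat) (xi : nat -> R) :
  (2 <= k)%nat ->
  (forall n : nat, (k < n)%nat -> 0 < xi n < 1 /\ P n k (xi n) = Q n k (xi n)) ->
  is_lim_seq (fun n => xi n ^ (n - 1)) 0.
Proof.
  intros Hk Hxi; apply is_lim_seq_spec; intros [eps Heps]; simpl.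
  set (q := / (1 + eps ^ 2 / (4 * INR (k + 1)))).
  assert (Hd : 0 < eps ^ 2 / (4 * INR (k + 1))).
  { apply Rdiv_lt_0_compat; [nra|]. pose proof (lt_0_INR (k + 1) ltac:(lia)); lra. }
  assert (Hq : 0 < q < 1).
  { unfold q; split; [apply Rinv_0_lt_compat; lra|].
    rewrite <- Rinv_1; apply Rinv_lt_contravar; lra. }
  destruct (pow_lt_1_zero q ltac:(rewrite Rabs_pos_eq; lra) (eps ^ (k - 1))
              ltac:(apply pow_lt; lra)) as [N HN].
  (* Beyond N (and k), x^(n-1) >= eps would contradict q^(n-1) < eps^(k-1). *)
  exists (S N + S k)%nat; intros n Hn.
  destruct (Hxi n ltac:(lia)) as [Hx HPQ].
  pose proof (pow_in_unit_interval (xi n) (n - 1) Hx) as Hy.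
  rewrite Rminus_0_r, Rabs_pos_eq by lra.
  destruct (Rlt_or_le (xi n ^ (n - 1)) eps) as [Hlt | Hge]; [exact Hlt | exfalso].
  pose proof (root_power_bound n k (xi n) eps Hk ltac:(lia) Hx HPQ Heps Hge) as Hb.
  specialize (HN (n - 1)%nat ltac:(lia)).
  rewrite Rabs_pos_eq in HN by (apply pow_le; lra).
  fold q in Hb; lra.
Qed.

Definition cn_denom (k : nat) (t : R) : R :=
  rem3 (k + 2) t / INR (k + 2) - rem3 (k + 1) t / INR (k + 1).

Definition cn_profile (k : nat) (t : R) : R := 4 * root_factor k t / cn_denom k t.

(* At a root, C_n(k) is the profile evaluated at the expansion parameter:
   numerator and denominator of C_n(k) are t^3 times those of the profile
   (the identity holds even when D_k(t) = 0, both sides then being 0). *)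
Lemma Cn_at_root (n k : nat) (x : R) :
  (k < n)%nat -> 0 < x -> P n k x = Q n k x ->
  Cn n k x = cn_profile k (expansion_param n x).
Proof.
  intros Hn Hx HPQ.
  pose proof (root_relation n k x HPQ) as Hz.
  pose proof (expansion_param_pos n x Hx) as Ht.
  set (t := expansion_param n x) in Hz, Ht |- *.
  assert (K1 : 0 < INR (k + 1)) by (apply lt_0_INR; lia).
  assert (K2 : 0 < INR (k + 2)) by (apply lt_0_INR; lia).
  assert (Hnum : x ^ (3 * n - k - 2) = t ^ 3 * (4 * root_factor k t)).
  { replace (x ^ (3 * n - k - 2)) with ((x ^ (n - 1)) ^ 2 * x ^ (n - k))
      by (rewrite <- pow_mult, <- pow_add; f_equal; lia).
    replace (x ^ (n - 1)) with (2 * t) by (unfold t, expansion_param; field).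
    rewrite Hz; ring. }
  assert (Hden : / INR (k + 2) * ((1 + x ^ (n - 1) / 2) ^ (k + 2)
                                  - (1 - x ^ (n - 1) / 2) ^ (k + 2)) - x ^ (n - k)
                 = t ^ 3 * cn_denom k t).
  { change (x ^ (n - 1) / 2) with t.
    rewrite rem3_spec, Hz; unfold root_factor, cn_denom; field; lra. }
  unfold Cn, cn_profile; rewrite Hnum, Hden.
  apply Rdiv_mult_l_l; apply pow_nonzero; lra.
Qed.

(* D_k(0) = (k+1)k/3 - k(k-1)/3. *)
Lemma cn_denom_at_0 (k : nat) : cn_denom k 0 = 2 * INR k / 3.
Proof.
  unfold cn_denom; rewrite !rem3_at_0, !plus_INR; simpl.
  field; split; pose proof (pos_INR k); lra.
Qed.

Lemma cn_profile_at_0 (k : nat) : (1 <= k)%nat -> cn_profile k 0 = 12 / INR k.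
Proof.
  intros Hk.
  assert (0 < INR k) by (apply lt_0_INR; lia).
  assert (0 < INR (k + 1)) by (apply lt_0_INR; lia).
  unfold cn_profile, root_factor; rewrite cn_denom_at_0; field; lra.
Qed.

Lemma root_factor_continuous (k : nat) (t : R) : continuous (root_factor k) t.
Proof.
  unfold root_factor, Rdiv.
  apply (continuous_plus (fun _ => 2) (fun s => s ^ 2 * rem3 (k + 1) s * / INR (k + 1)));
    [apply continuous_const|].
  apply (continuous_mult (fun s => s ^ 2 * rem3 (k + 1) s) (fun _ => / INR (k + 1)));
    [|apply continuous_const].
  apply (continuous_mult (fun s => s ^ 2) (rem3 (k + 1))); [|apply rem3_continuous].
  apply (continuous_mult (fun s => s) (fun s => s * 1)); [apply continuous_id|].
  apply (continuous_mult (fun s => s) (fun _ => 1));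
    [apply continuous_id | apply continuous_const].
Qed.

Lemma cn_denom_continuous (k : nat) (t : R) : continuous (cn_denom k) t.
Proof.
  unfold cn_denom, Rdiv.
  apply (continuous_minus (fun s => rem3 (k + 2) s * / INR (k + 2))
                          (fun s => rem3 (k + 1) s * / INR (k + 1))).
  - apply (continuous_mult (rem3 (k + 2)) (fun _ => / INR (k + 2)));
      [apply rem3_continuous | apply continuous_const].
  - apply (continuous_mult (rem3 (k + 1)) (fun _ => / INR (k + 1)));
      [apply rem3_continuous | apply continuous_const].
Qed.

Lemma cn_profile_continuous (k : nat) (t : R) :
  cn_denom k t <> 0 -> continuous (cn_profile k) t.
Proof.
  intros HD; unfold cn_profile, Rdiv.
  apply (continuous_mult (fun s => 4 * root_factor k s) (fun s => / cn_denom k s)).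
  - apply (continuous_mult (fun _ => 4) (root_factor k));
      [apply continuous_const | apply root_factor_continuous].
  - apply continuous_Rinv_comp; [apply cn_denom_continuous | exact HD].
Qed.

Theorem lemma5p6 (k : nat) (Hk : (2 <= k)%nat)
  (xi : nat -> R)
  (Hxi : forall n : nat, (k < n)%nat ->
           0 < xi n < 1 /\ P n k (xi n) = Q n k (xi n))
  (alpha : R)
  (Halpha : is_limsup (fun n => xi n ^ (n - 1)) alpha)
  (np : nat -> nat)
  (Hinc : forall p : nat, (np p < np (S p))%nat)
  (Hgt : forall p : nat, (k < np p)%nat)
  (Hcv : Un_cv (fun p => xi (np p) ^ (np p - 1)) alpha) :
  Un_cv (fun p => Cn (np p) k (xi (np p))) (12 / INR k).
Proof.
  assert (Ht : is_lim_seq (fun p => expansion_param (np p) (xi (np p))) 0).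
  { replace 0 with (0 / 2) by field.
    apply is_lim_seq_div'; [|apply is_lim_seq_const | lra].
    apply (is_lim_seq_subseq (fun n => xi n ^ (n - 1)) 0 np).
    - apply eventually_subseq; exact Hinc.
    - exact (root_powers_vanish k xi Hk Hxi). }
  assert (Hprofile : is_lim_seq (fun p => cn_profile k (expansion_param (np p) (xi (np p))))
                                (12 / INR k)).
  { rewrite <- cn_profile_at_0 by lia.
    apply (filterlim_comp _ _ _ _ (cn_profile k) eventually (locally 0) _ Ht).
    apply cn_profile_continuous; rewrite cn_denom_at_0.
    assert (0 < INR k) by (apply lt_0_INR; lia); lra. }
  apply is_lim_seq_Reals, is_lim_seq_ext with (2 := Hprofile); intros p.
  destruct (Hxi (np p) (Hgt p)) as [Hx HPQ].
  symmetry; exact (Cn_at_root (np p) k (xi (np p)) (Hgt p) (proj1 Hx) HPQ).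
Qed.
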